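(* Let $n\ge 1$, let $k$ be an even positive divisor of $n$, and let $A$ be a subgroup of $(\mathbb{Z}/n\mathbb{Z})^\times$ such that $$A=\{jn/k+1 \bmod n : j\in J_+\}\cup\{jn/k-1 \bmod n: j\in J_-\}$$ for subsets $J_+,J_-\subseteq\{0,1,\dots,k-1\}$ with $J_-=\{k/2-j \bmod k : j\in J_+\}$. Let $r\in\mathbb{Z}/n\mathbb{Z}$ (represented by an integer) and $X=Ar$. (i) If $r$ is even, then $\sigma_X(y)\in\mathbb{R}$ for all $y\in\mathbb{Z}/n\mathbb{Z}$. (ii) If $r$ is odd, then $\sigma_X(y)$ is real whenever $y$ is even and purely imaginary whenever $y$ is odd (parity of $y$ being well defined since $n$ is even).
   Context: Write $e(\theta)=\exp(2\pi i\theta)$. For a subgroup $A$ of $(\mathbb{Z}/n\mathbb{Z})^\times$ and $r\in\mathbb{Z}/n\mathbb{Z}$, let $X=Ar=\{ar:a\in A\}$ and $\sigma_X(y)=\sum_{x\in X}e\left(\frac{xy}{n}\right)$ for $y\in\mathbb{Z}/n\mathbb{Z}$. *)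

(* Complex numbers are represented as pairs (real part, imaginary part). *)
From Stdlib Require Import Reals.
From mathcomp Require Import all_boot.

Set Implicit Arguments.
Unset Strict Implicit.
Unset Printing Implicit Defensive.

Definition cplx := (R * R)%type.
Definition cadd (z w : cplx) : cplx := (Rplus (fst z) (fst w), Rplus (snd z) (snd w)).
Definition czero : cplx := (R0, R0).

(* e(theta) = exp(2 pi i theta) = cos(2 pi theta) + i sin(2 pi theta). *)
Definition e (theta : R) : cplx :=
  (cos (Rmult (Rmult (IZR 2%Z) PI) theta), sin (Rmult (Rmult (IZR 2%Z) PI) theta)).

Definition is_real (z : cplx) : Prop := snd z = R0.
Definition is_purely_imaginary (z : cplx) : Prop := fst z = R0.

(* Z/nZ is modelled by 'I_n (residues 0..n-1); integers mod n by nat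
   representatives. *)

Definition unit_subgroup (n : nat) (A : {set 'I_n}) : Prop :=
  [/\ (forall a, a \in A -> coprime (val a) n),
      (exists2 u, u \in A & val u = 1 %% n),
      (forall a b, a \in A -> b \in A ->
          exists2 c, c \in A & val c = (val a * val b) %% n)
    & (forall a, a \in A -> exists2 b, b \in A & (val a * val b) %% n = 1 %% n)].

(* X = A r = { a r mod n : a in A }, r an integer representative (nat suffices
   to represent every residue). *)
Definition Aset_mul (n : nat) (A : {set 'I_n}) (r : nat) : {set 'I_n} :=
  [set x : 'I_n | [exists a in A, val x == (val a * r) %% n]].

Definition sigmaX (n : nat) (X : {set 'I_n}) (y : nat) : cplx :=
  foldr cadd czero
    [seq e (Rdiv (INR (val x * y)) (INR n)) | x <- enum X].

(* Put H = (k/2)(n/k) = n/2.  The description of A by the index sets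
   J+ and J- = k/2 - J+ pairs every element j n/k + 1 of A with the element
   (k/2 - j) n/k - 1, and these sum to H modulo n; hence A is stable under
   a |-> H - a, and X = A r is stable under the reflection x |-> c - x with
   c = H r.  Reindexing sigma_X(y) along this involution turns the summand
   angle 2 pi x y / n into (2 pi c y / n) - 2 pi x y / n = pi r y - 2 pi x y / n
   (mod 2 pi).  When r y is even, sin is odd about pi r y, so the imaginary
   part of sigma_X(y) vanishes; when r y is odd, cos is odd about pi r y, so
   the real part vanishes. *)

From HB Require Import structures.
From Stdlib Require Import Reals Lra.
From mathcomp Require Import all_boot zify.

Set Implicit Arguments.
Unset Strict Implicit.
Unset Printing Implicit Defensive.

HB.instance Definition _ := Monoid.isComLaw.Build R R0 Rplus
  (fun a b c => esym (Rplus_assoc a b c)) Rplus_comm Rplus_0_l.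

Open Scope R_scope.

Lemma big_involution_antisym (I : finType) (X : {set I}) (phi : I -> I) (F : I -> R) :
  involutive phi -> (forall x, x \in X -> phi x \in X) ->
  (forall x, F (phi x) = - F x) -> \big[Rplus/0]_(x in X) F x = 0.
Proof.
move=> phiK phiX F_phi.
have sum_phi : \big[Rplus/0]_(x in X) F x = \big[Rplus/0]_(x in X) F (phi x).
  rewrite (reindex_inj (inv_inj phiK)); apply: eq_bigl => x.
  by apply/idP/idP => [/phiX|/phiX]; rewrite ?phiK.
have sum_opp : \big[Rplus/0]_(x in X) F (phi x) = - \big[Rplus/0]_(x in X) F x.
  rewrite (eq_bigr (fun x => - F x)) // ; symmetry.
  by apply: (big_morph Ropp) => [a b|]; rewrite ?Ropp_plus_distr ?Ropp_0.
lra.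
Qed.

Lemma sin_pi_even_sub (N : nat) (t : R) : ~~ odd N -> sin (PI * INR N - t) = - sin t.
Proof.
move=> N_even; rewrite -[N](odd_double_half N) (negbTE N_even) add0n -muln2.
rewrite -multE mult_INR.
replace (PI * (INR N./2 * INR 2) - t) with (- t + 2 * INR N./2 * PI) by (simpl; ring).
by rewrite sin_period sin_neg.
Qed.

Lemma cos_pi_odd_sub (N : nat) (t : R) : odd N -> cos (PI * INR N - t) = - cos t.
Proof.
move=> N_odd; rewrite -[N](odd_double_half N) N_odd -muln2.
rewrite -plusE -multE plus_INR mult_INR.
replace (PI * (INR true + INR N./2 * INR 2) - t)
  with ((- t + PI) + 2 * INR N./2 * PI) by (simpl; ring).
by rewrite cos_period neg_cos cos_neg.
Qed.

Definition angle (n y v : nat) : R := 2 * PI * (INR (v * y) / INR n).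

Lemma foldr_cadd_fst (s : seq cplx) :
  fst (foldr cadd czero s) = \big[Rplus/0]_(z <- s) fst z.
Proof. by elim: s => [|z s IH]; rewrite ?big_nil ?big_cons //= IH. Qed.

Lemma foldr_cadd_snd (s : seq cplx) :
  snd (foldr cadd czero s) = \big[Rplus/0]_(z <- s) snd z.
Proof. by elim: s => [|z s IH]; rewrite ?big_nil ?big_cons //= IH. Qed.

Lemma sigmaX_re n (X : {set 'I_n}) y :
  fst (sigmaX X y) = \big[Rplus/0]_(x in X) cos (angle n y x).
Proof. by rewrite /sigmaX foldr_cadd_fst big_map big_enum. Qed.

Lemma sigmaX_im n (X : {set 'I_n}) y :
  snd (sigmaX X y) = \big[Rplus/0]_(x in X) sin (angle n y x).
Proof. by rewrite /sigmaX foldr_cadd_snd big_map big_enum. Qed.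

Section Reflection.

Variables (n : nat) (n_gt0 : (0 < n)%N).

Definition reflect_at (c : nat) (x : 'I_n) : 'I_n :=
  Ordinal (ltn_pmod (c + n - x) n_gt0).

Lemma reflect_atK c : involutive (reflect_at c).
Proof.
move=> x; apply: val_inj => /=; set v := ((c + n - x) %% n)%N.
have x_le : (x <= c + n)%N by rewrite (leq_trans (ltnW (ltn_ord x))) ?leq_addl.
rewrite -[RHS](modn_small (ltn_ord x)); apply/eqP; rewrite -(eqn_modDr v).
rewrite subnK; last by rewrite (leq_trans (ltnW (ltn_pmod _ n_gt0))) ?leq_addl.
by rewrite /v modnDmr subnKC.
Qed.

Lemma angle_reflect_at c y (x : 'I_n) : exists t : nat,
  angle n y (reflect_at c x) + 2 * INR t * PI = angle n y c - angle n y x + 2 * INR y * PI.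
Proof.
rewrite /angle; set v := ((c + n - x) %% n)%N; set q := ((c + n - x) %/ n)%N.
exists (q * y)%N.
have x_le : (x <= c + n)%N by rewrite (leq_trans (ltnW (ltn_ord x))) ?leq_addl.
have E : (v + x + q * n = c + n)%N.
  by rewrite /v /q addnAC [((_ %% _) + _)%N]addnC -divn_eq subnK.
have ER : INR v + INR x + INR q * INR n = INR c + INR n.
  by have := f_equal INR E; rewrite -!plusE -!multE !plus_INR !mult_INR.
have n_neq0 : INR n <> 0 by apply: not_0_INR => n0; move: n_gt0; rewrite n0.
rewrite -!multE !mult_INR (_ : INR (reflect_at c x) = INR v) //.
replace (INR v) with (INR c + INR n - INR x - INR q * INR n) by lra.
by field.
Qed.

Lemma sum_reflect_symmetric_zero (X : {set 'I_n}) c y (G : R -> R) :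
  (forall x, x \in X -> reflect_at c x \in X) ->
  (forall t m, G (t + 2 * INR m * PI) = G t) ->
  (forall t, G (angle n y c - t) = - G t) ->
  \big[Rplus/0]_(x in X) G (angle n y x) = 0.
Proof.
move=> X_sym G_per G_anti.
apply: (@big_involution_antisym _ X _ (fun x => G (angle n y x))
                                   (reflect_atK c) X_sym) => x.
have [t Ht] := angle_reflect_at c y x.
by rewrite -(G_per _ t) Ht G_per G_anti.
Qed.

End Reflection.

Lemma angle_half_multiple (H r y : nat) : (0 < H)%N ->
  angle (H * 2) y (H * r) = PI * INR (r * y).
Proof.
move=> H_gt0; have H_neq0 : INR H <> 0 by apply: not_0_INR; lia.
rewrite /angle -!multE !mult_INR /=; field; exact: H_neq0.
Qed.

Close Scope R_scope.

Lemma plus_minus_pair_sum (k m j : nat) : 0 < k -> 0 < m -> j < k ->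
  ((j * m + 1) + ((k %/ 2 + k - j) %% k * m + k * m - 1)) %% (k * m)
  = (k %/ 2 * m) %% (k * m).
Proof.
move=> k_gt0 m_gt0 j_lt; set j' := (k %/ 2 + k - j) %% k.
have km_gt0 : 0 < k * m by rewrite muln_gt0 k_gt0.
have -> : j * m + 1 + (j' * m + k * m - 1) = (j + j') * m + k * m by lia.
rewrite modnDr -!muln_modl // /j' modnDmr addnC subnK ?modnDr //.
by rewrite (leq_trans (ltnW j_lt)) ?leq_addl.
Qed.

Lemma half_minus_closed (n k : nat) (A : {set 'I_n}) (Jp Jm : {set 'I_k}) :
  0 < n -> 0 < k -> k %| n ->
  (forall x : 'I_n, x \in A <->
      (exists2 j : 'I_k, j \in Jp & val x = (val j * (n %/ k) + 1) %% n) \/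
      (exists2 j : 'I_k, j \in Jm & val x = (val j * (n %/ k) + n - 1) %% n)) ->
  (forall j : 'I_k, j \in Jm <->
      exists2 j' : 'I_k, j' \in Jp & val j = (k %/ 2 + k - val j') %% k) ->
  forall a, a \in A ->
    exists2 b, b \in A & (val b + val a) %% n = (k %/ 2 * (n %/ k)) %% n.
Proof.
move=> n_gt0 k_gt0 k_dvd_n A_def Jm_def a aA; set m := n %/ k.
have n_km : n = k * m by rewrite mulnC divnK.
have m_gt0 : 0 < m by move: n_gt0; rewrite n_km muln_gt0 => /andP[].
have pair_sum j : j < k ->
    ((j * m + 1) + ((k %/ 2 + k - j) %% k * m + n - 1)) %% n
    = (k %/ 2 * m) %% n.
  by rewrite n_km; exact: plus_minus_pair_sum.
case/A_def: aA => [[j jJp ->] | [j jJm ->]].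
- pose j' : 'I_k := Ordinal (ltn_pmod (k %/ 2 + k - j) k_gt0).
  have j'Jm : j' \in Jm by apply/Jm_def; exists j.
  exists (Ordinal (ltn_pmod (j' * m + n - 1) n_gt0)); first by apply/A_def; right; exists j'.
  by rewrite /= modnDml modnDmr addnC pair_sum.
- have [j' j'Jp j_def] := (Jm_def j).1 jJm.
  exists (Ordinal (ltn_pmod (j' * m + 1) n_gt0)); first by apply/A_def; left; exists j'.
  by rewrite /= modnDml modnDmr j_def pair_sum.
Qed.

Lemma Aset_mul_reflect_closed (n : nat) (n_gt0 : 0 < n) (A : {set 'I_n}) r H :
  (forall a, a \in A -> exists2 b, b \in A & (val b + val a) %% n = H %% n) ->
  forall x, x \in Aset_mul A r -> reflect_at n_gt0 (H * r) x \in Aset_mul A r.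
Proof.
move=> A_sym x; rewrite !inE => /existsP [a /andP [aA /eqP x_def]].
have [b bA ba_H] := A_sym a aA.
apply/existsP; exists b; rewrite bA /=; apply/eqP/eqP.
have br_ar : (b * r + a * r) %% n = (H * r) %% n by rewrite -mulnDl -modnMml ba_H modnMml.
rewrite -(eqn_modDr (a * r)) br_ar -modnDmr -x_def subnK ?modnDr ?modn_mod //.
by rewrite (leq_trans (ltnW (ltn_ord x))) ?leq_addl.
Qed.

Theorem proposition4p1
  (n k : nat) (A : {set 'I_n}) (Jp Jm : {set 'I_k}) (r : nat) :
  (1 <= n)%N ->
  (0 < k)%N -> ~~ odd k -> (k %| n)%N ->
  unit_subgroup A ->
  (forall x : 'I_n, x \in A <->
      (exists2 j : 'I_k, j \in Jp & val x = (val j * (n %/ k) + 1) %% n) \/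
      (exists2 j : 'I_k, j \in Jm & val x = (val j * (n %/ k) + n - 1) %% n)) ->
  (forall j : 'I_k, j \in Jm <->
      exists2 j' : 'I_k, j' \in Jp & val j = (k %/ 2 + k - val j') %% k) ->
  (~~ odd r -> forall y : nat, is_real (sigmaX (Aset_mul A r) y)) /\
  (odd r -> forall y : nat,
      (~~ odd y -> is_real (sigmaX (Aset_mul A r) y)) /\
      (odd y -> is_purely_imaginary (sigmaX (Aset_mul A r) y))).
Proof.
move=> n_gt0 k_gt0 k_even k_dvd_n _ A_def Jm_def.
set H := k %/ 2 * (n %/ k).
have n_2H : n = H * 2.
  have k_2h : k = k %/ 2 * 2 by rewrite divnK // dvdn2.
  have n_km : n = k * (n %/ k) by rewrite mulnC divnK.
  rewrite /H; lia.
have H_gt0 : 0 < H by move: n_gt0; rewrite n_2H muln_gt0 => /andP[].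
have X_sym := Aset_mul_reflect_closed n_gt0 (r := r)
  (half_minus_closed n_gt0 k_gt0 k_dvd_n A_def Jm_def).
have center_angle y : angle n y (H * r) = Rmult PI (INR (r * y)).
  by rewrite [in angle n]n_2H angle_half_multiple.
split=> [r_even y | r_odd y]; last split=> [y_even | y_odd].
- rewrite /is_real sigmaX_im; apply: (sum_reflect_symmetric_zero X_sym sin_period).
  by move=> t; rewrite center_angle sin_pi_even_sub // oddM negb_and r_even.
- rewrite /is_real sigmaX_im; apply: (sum_reflect_symmetric_zero X_sym sin_period).
  by move=> t; rewrite center_angle sin_pi_even_sub // oddM negb_and y_even orbT.
- rewrite /is_purely_imaginary sigmaX_re.
  apply: (sum_reflect_symmetric_zero X_sym cos_period).
  by move=> t; rewrite center_angle cos_pi_odd_sub // oddM r_odd y_odd.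
Qed.
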